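(* Let $\mathcal{R}$ be any resolute voting rule. Every $2$-by-$2$ GS-game under $\mathcal{R}$ has at least one Nash equilibrium in pure strategies.
   Context: Voters have strict linear orders over a finite candidate set $C$; $\mathcal{R}$ maps each preference profile to a winning candidate. $(V_{-i},v_i')$ is $V$ with $v_i$ replaced by $v_i'$. A GS-manipulation of voter $i$ at profile $V$ is a vote $v_i'$ such that $i$ strictly prefers $\mathcal{R}(V_{-i},v_i')$ to $\mathcal{R}(V)$ and for every vote $v_i''$ either $\mathcal{R}(V_{-i},v_i'')=\mathcal{R}(V_{-i},v_i')$ or $i$ strictly prefers $\mathcal{R}(V_{-i},v_i')$ to $\mathcal{R}(V_{-i},v_i'')$; $i$ is a GS-manipulator if he has one. A GS-game for $V$: players are all GS-manipulators at $V$; player $i$'s action set consists of his sincere vote $v_i$ and a subset of his GS-manipulations; other voters vote sincerely; each player compares action profiles by his preference over the resulting winners. A $2$-by-$2$ GS-game is one with exactly two players, each having exactly two actions (his sincere vote and one GS-manipulation). A pure Nash equilibrium is an action profile at which no player can switch to his other action and obtain a winner he strictly prefers. *)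

From mathcomp Require Import all_boot.
Set Implicit Arguments. Unset Strict Implicit. Unset Printing Implicit Defensive.

(* A strict linear order on the candidate set C: r a b means "a is strictly preferred to b". *)
Definition strict_linear (C : finType) (r : rel C) : Prop :=
  irreflexive r /\ transitive r /\ (forall a b : C, a != b -> r a b || r b a).

Record vote (C : finType) := Vote { pref :> rel C; pref_linear : strict_linear pref }.

Definition profile (n : nat) (C : finType) := 'I_n -> vote C.

Definition rule (n : nat) (C : finType) := profile n C -> C.

Definition upd (n : nat) (C : finType) (V : profile n C) (i : 'I_n) (v : vote C)
  : profile n C := fun j => if j == i then v else V j.

Definition GS_manipulation (n : nat) (C : finType) (R : rule n C) (V : profile n C)
  (i : 'I_n) (v' : vote C) : Prop :=
  V i (R (upd V i v')) (R V) /\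
  forall v'' : vote C,
    R (upd V i v'') = R (upd V i v') \/ V i (R (upd V i v')) (R (upd V i v'')).

Definition GS_manipulator (n : nat) (C : finType) (R : rule n C) (V : profile n C)
  (i : 'I_n) : Prop := exists v', GS_manipulation R V i v'.

(* Outcome of the 2-by-2 GS-game with players i, j whose actions are
   sincere (false) or the designated GS-manipulation ai / aj (true). *)
Definition game2_outcome (n : nat) (C : finType) (R : rule n C) (V : profile n C)
  (i j : 'I_n) (ai aj : vote C) (x y : bool) : C :=
  R (upd (upd V i (if x then ai else V i)) j (if y then aj else V j)).

Definition game2_pure_NE (n : nat) (C : finType) (R : rule n C) (V : profile n C)
  (i j : 'I_n) (ai aj : vote C) (x y : bool) : Prop :=
  ~ V i (game2_outcome R V i j ai aj (~~ x) y) (game2_outcome R V i j ai aj x y) /\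
  ~ V j (game2_outcome R V i j ai aj x (~~ y)) (game2_outcome R V i j ai aj x y).

(* At the sincere profile both players strictly gain by deviating, so the best
   responses of the 2-by-2 game cannot cycle: either one of the two profiles
   where a single player manipulates is stable, or the profile where both
   manipulate is. *)
From mathcomp Require Import all_boot.
From Stdlib Require Import FunctionalExtensionality.

Section TwoByTwoGame.

Variable T : Type.
Variables (pi pj : rel T) (o : bool -> bool -> T).

Hypothesis pi_asym : forall a b, pi a b -> ~ pi b a.
Hypothesis pj_asym : forall a b, pj a b -> ~ pj b a.

Definition pure_NE2 (x y : bool) : Prop :=
  ~ pi (o (~~ x) y) (o x y) /\ ~ pj (o x (~~ y)) (o x y).

Lemma pure_NE2_exists :
  pi (o true false) (o false false) -> pj (o false true) (o false false) ->
  exists x y, pure_NE2 x y.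
Proof.
move=> dev_i dev_j.
case j_leaves: (pj (o true true) (o true false)); last first.
  by exists true, false; split => /=; [exact: pi_asym | rewrite j_leaves].
case i_leaves: (pi (o true true) (o false true)); last first.
  by exists false, true; split => /=; [rewrite i_leaves | exact: pj_asym].
by exists true, true; split; [exact: pi_asym | exact: pj_asym].
Qed.

End TwoByTwoGame.

Lemma vote_asym (C : finType) (v : vote C) (a b : C) : v a b -> ~ v b a.
Proof.
case: v => r [irr [tr _]] /= rab rba.
by have := irr a; rewrite (tr _ _ _ rab rba).
Qed.

Section Profiles.

Variables (n : nat) (C : finType).
Implicit Types (V : profile n C) (i j : 'I_n) (a : vote C).

Lemma upd_id V i : upd V i (V i) = V.
Proof. by apply: functional_extensionality => k; rewrite /upd; case: eqP => [->|]. Qed.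

Lemma upd_neq V i j a : i != j -> upd V i a j = V j.
Proof. by rewrite /upd eq_sym => /negbTE ->. Qed.

Lemma game2_outcome_sincere (R : rule n C) V i j ai aj :
  game2_outcome R V i j ai aj false false = R V.
Proof. by rewrite /game2_outcome !upd_id. Qed.

Lemma game2_outcome_left (R : rule n C) V i j ai aj : i != j ->
  game2_outcome R V i j ai aj true false = R (upd V i ai).
Proof.
by move=> ij; rewrite /game2_outcome /= -(upd_neq V _ _ ai ij) upd_id.
Qed.

Lemma game2_outcome_right (R : rule n C) V i j ai aj :
  game2_outcome R V i j ai aj false true = R (upd V j aj).
Proof. by rewrite /game2_outcome /= upd_id. Qed.

End Profiles.

Theorem mainTheorem7 (n : nat) (C : finType) (R : rule n C) (V : profile n C)
  (i j : 'I_n) (ai aj : vote C) :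
  i != j ->
  (forall k : 'I_n, GS_manipulator R V k <-> (k = i \/ k = j)) ->
  GS_manipulation R V i ai ->
  GS_manipulation R V j aj ->
  exists x y : bool, game2_pure_NE R V i j ai aj x y.
Proof.
move=> ij _ [gain_i _] [gain_j _].
apply: (@pure_NE2_exists _ (V i) (V j) (game2_outcome R V i j ai aj)
         (@vote_asym C (V i)) (@vote_asym C (V j))).
- by rewrite game2_outcome_left // game2_outcome_sincere.
- by rewrite game2_outcome_right game2_outcome_sincere.
Qed.
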